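(* Let $A$ be a commutative quasi-ring and $I$ an ideal of $A$. The congruence class of $0$ modulo $I$ is equal to the heart $C(I)$ of $I$, and it is a closed ideal of $A$. In particular, if $I$ is closed, the class of $0$ modulo $I$ is $I$ itself.
   Context: A quasi-ring is a semiring (with $(A,+)$ a commutative monoid with neutral $0$, $(A,\cdot)$ a monoid with unit $1$, distributivity, $0$ absorbing) whose unit $1$ is quasi-invertible for addition (there is $y$ with $1+y+1=1$, $y+1+y=y$). An ideal is a subset containing $0$ stable under addition and under multiplication by elements of $A$. Congruence modulo $I$: $a\equiv b \pmod I$ iff $(a+I)\cap(b+I)\neq\emptyset$ and for all $c\in I$, $r\in A$: $ac+r\in I\iff bc+r\in I$. The closure of $I$ is $\overline I=\{x\in A : (x+I)\cap I\neq\emptyset\}$; $I$ is closed if $\overline I=I$ (equivalently: $(a+I)\cap I\neq\emptyset\Rightarrow a\in I$). The heart of $I$ is $C(I)=\{x\in\overline I : \forall \alpha\in I,\ \forall r\in A,\ x\alpha+r\in I\Rightarrow r\in I\}$. *)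

(* A (commutative) semiring in the paper's sense is a
   MathComp comPzSemiRingType: commutative additive monoid, multiplicative
   monoid, distributivity, 0 absorbing, commutative multiplication. *)
From HB Require Import structures.
From mathcomp Require Import all_boot all_order all_algebra.
Set Implicit Arguments. Unset Strict Implicit. Unset Printing Implicit Defensive.
Import GRing.Theory.
Local Open Scope ring_scope.

(* the unit 1 is quasi-invertible for addition *)
Definition quasi_ring_unit (A : comPzSemiRingType) : Prop :=
  exists y : A, 1 + y + 1 = 1 /\ y + 1 + y = y.

Definition is_ideal (A : comPzSemiRingType) (I : A -> Prop) : Prop :=
  I 0 /\ (forall x y, I x -> I y -> I (x + y)) /\
  (forall a x, I x -> I (a * x)).

Definition congr_mod (A : comPzSemiRingType) (I : A -> Prop) (a b : A) : Prop :=
  (exists c d, I c /\ I d /\ a + c = b + d) /\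
  (forall c r, I c -> (I (a * c + r) <-> I (b * c + r))).

Definition closure (A : comPzSemiRingType) (I : A -> Prop) (x : A) : Prop :=
  exists c d, I c /\ I d /\ x + c = d.

Definition is_closed (A : comPzSemiRingType) (I : A -> Prop) : Prop :=
  forall x, closure I x <-> I x.

Definition heart (A : comPzSemiRingType) (I : A -> Prop) (x : A) : Prop :=
  closure I x /\ (forall alpha r, I alpha -> I (x * alpha + r) -> I r).

Definition class0 (A : comPzSemiRingType) (I : A -> Prop) (x : A) : Prop :=
  congr_mod I x 0.

From Pilot Require Import Defs.
From HB Require Import structures.
From mathcomp Require Import all_boot all_order all_algebra.
Set Implicit Arguments. Unset Strict Implicit. Unset Printing Implicit Defensive.
Import GRing.Theory.
Local Open Scope ring_scope.

(* Proof of Proposition 2.3.  Throughout, I is an ideal of a commutative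
   semiring A.
   - Unfolding the definitions, x ≡ 0 (mod I) says that x lies in the
     closure of I and that x·α + r ∈ I ⇔ r ∈ I for α ∈ I; the implication
     r ∈ I ⇒ x·α + r ∈ I is automatic, so the class of 0 is the heart C(I).
   - The closure of I is an ideal; the heart, being the part of the
     closure cut out by a condition stable under sums and multiples, is
     an ideal as well.
   - The heart is closed: if x + c = d with c, d ∈ C(I), then x lies in
     the closure of I (closures compose) and x·α + r ∈ I gives
     d·α + r = c·α + (x·α + r) ∈ I, hence r ∈ I.
   - If I is closed, C(I) ⊆ closure(I) = I, and conversely every element of
     I satisfies the heart condition because I is closed. *)

Section Extensionality.

Variables (A : comPzSemiRingType) (P Q : A -> Prop).
Hypothesis PQ : forall x, P x <-> Q x.

Lemma is_ideal_ext : is_ideal P -> is_ideal Q.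
Proof.
move=> [P0 [PD PM]]; split; last split.
- exact/PQ.
- by move=> x y /PQ Px /PQ Py; apply/PQ/PD.
- by move=> a x /PQ Px; apply/PQ/PM.
Qed.

Lemma is_closed_ext : is_closed P -> is_closed Q.
Proof.
move=> Pcl x; split=> [[c [d [/PQ Pc [/PQ Pd Exc]]]] | /PQ/Pcl [c [d [Pc [Pd Exc]]]]].
- by apply/PQ/Pcl; exists c, d.
- by exists c, d; split; [exact/PQ | split; [exact/PQ |]].
Qed.

End Extensionality.

Section Heart.

Variables (A : comPzSemiRingType) (I : A -> Prop).
Hypothesis hI : is_ideal I.

Let ideal0 : I 0 := hI.1.
Let idealD x y : I x -> I y -> I (x + y) := hI.2.1 x y.
Let idealM a x : I x -> I (a * x) := hI.2.2 a x.

Lemma closure_of_mem x : I x -> Defs.closure I x.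
Proof. by move=> Ix; exists 0, x; rewrite addr0. Qed.

Lemma closureD x y : Defs.closure I x -> Defs.closure I y -> Defs.closure I (x + y).
Proof.
move=> [c1 [d1 [Ic1 [Id1 Ex]]]] [c2 [d2 [Ic2 [Id2 Ey]]]].
exists (c1 + c2), (d1 + d2); do !split; try exact: idealD.
by rewrite -Ex -Ey addrACA.
Qed.

Lemma closureM a x : Defs.closure I x -> Defs.closure I (a * x).
Proof.
move=> [c [d [Ic [Id Ex]]]].
exists (a * c), (a * d); do !split; try exact: idealM.
by rewrite -Ex mulrDr.
Qed.

Lemma closure_closure x c d :
  Defs.closure I c -> Defs.closure I d -> x + c = d -> Defs.closure I x.
Proof.
move=> [c1 [d1 [Ic1 [Id1 Ec]]]] [c2 [d2 [Ic2 [Id2 Ed]]]] Exc.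
exists (d1 + c2), (d2 + c1); do !split; try exact: idealD.
by rewrite -Ec -Ed -Exc !addrA [_ + c2 + c1]addrAC.
Qed.

Lemma class0_heart x : class0 I x <-> heart I x.
Proof.
split=> -[[c [d [Ic [Id Exc]]]] Hx]; split; try by exists c, d; rewrite Exc add0r.
- by move=> a r Ia /(Hx a r Ia)/iffLR; rewrite mul0r add0r; apply.
- move=> a r Ia; rewrite mul0r add0r; split; first exact: Hx.
  by move=> Ir; apply: idealD => //; apply: idealM.
Qed.

Lemma heart_ideal : is_ideal (heart I).
Proof.
split; last split.
- split; first exact: closure_of_mem.
  by move=> a r _; rewrite mul0r add0r.
- move=> x y [Cx Hx] [Cy Hy]; split; first exact: closureD.
  move=> a r Ia; rewrite mulrDl -addrA => /(Hx a _ Ia); exact: Hy.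
- move=> b x [Cx Hx]; split; first exact: closureM.
  by move=> a r Ia; rewrite -mulrA mulrCA; apply: Hx; apply: idealM.
Qed.

Lemma heart_closed : is_closed (heart I).
Proof.
move=> x; split; last by move=> Hx; exists 0, x; rewrite addr0; split=> //; case: heart_ideal.
move=> [c [d [[Cc Hc] [[Cd Hd] Exc]]]]; split; first exact: closure_closure Exc.
move=> a r Ia Ixr; apply: (Hd a r Ia).
rewrite -Exc mulrDl [x * a + _]addrC -addrA.
by apply: idealD => //; apply: idealM.
Qed.

Lemma heart_of_closed : is_closed I -> forall x, heart I x <-> I x.
Proof.
move=> Icl x; split; first by case=> /Icl.
move=> Ix; split; first exact: closure_of_mem.
move=> a r Ia Ixr; apply/Icl.
by exists (x * a), (x * a + r); do !split=> //; [apply: idealM | rewrite addrC].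
Qed.

End Heart.

Theorem proposition2p3 (A : comPzSemiRingType) (hA : quasi_ring_unit A)
  (I : A -> Prop) (hI : is_ideal I) :
  (forall x, class0 I x <-> heart I x) /\
  is_ideal (class0 I) /\ is_closed (class0 I) /\
  (is_closed I -> forall x, class0 I x <-> I x).
Proof.
have class0E x : heart I x <-> class0 I x by apply: iff_sym; exact: class0_heart.
split; first exact: class0_heart.
split; first exact: is_ideal_ext class0E (heart_ideal hI).
split; first exact: is_closed_ext class0E (heart_closed hI).
move=> Icl x; apply: iff_trans (class0_heart hI x) _; exact: heart_of_closed.
Qed.
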